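(* Consider a two-asset G3M with fee parameter $\gamma\in(0,1)$ and a continuous reference price process $(S_t)_{t\ge0}$, $S_t>0$, with initial pool price $P_0$ satisfying $\gamma P_0\le S_0\le\gamma^{-1}P_0$. Assume there are no noise traders, the reference market is frictionless with infinite liquidity, and arbitrageurs continuously monitor and immediately act on arbitrage opportunities (so the pool price is moved only by arbitrage trades keeping it within the no-arbitrage band $[\gamma S_t,\gamma^{-1}S_t]$). Write $\ln P_t=\ln P_0+U_t-L_t$, where $L_t$ (resp. $U_t$) is the cumulative decrease (resp. increase) of the log pool price caused by arbitrage trades selling $X$ to (resp. buying $X$ from) the pool. Then, with $Z_t=\ln(S_t/P_t)$: (a) $Z_t=\ln S_t-\ln P_0+L_t-U_t$ and $Z_t\in[\ln\gamma,-\ln\gamma]$ for all $t\ge0$; (b) $L_t$ and $U_t$ are non-decreasing and continuous with $L_0=U_0=0$; (c) $L_t$ increases only when $Z_t=\ln\gamma$ and $U_t$ increases only when $Z_t=-\ln\gamma$. Furthermore, $$L_t=\sup_{0\le s\le t}\big(-\ln(\gamma P_0)+\ln S_s-U_s\big)^-,\qquad U_t=\sup_{0\le s\le t}\big(\ln(\gamma^{-1}P_0)-\ln S_s-L_s\big)^-,$$ where $(a)^-=\max\{-a,0\}$.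
   Context: $P_t$ is the G3M pool price of asset $X$ in units of $Y$ and $S_t$ the reference-market price. A process ''increases only when $Z_t=a$'' means that every point of increase of the process is a time $t$ with $Z_t=a$. *)

From HB Require Import structures.
From mathcomp Require Import all_boot all_order all_algebra.
From mathcomp Require Import all_classical all_reals all_analysis.
Set Implicit Arguments. Unset Strict Implicit. Unset Printing Implicit Defensive.
Import Order.TTheory GRing.Theory Num.Theory.
Import numFieldNormedType.Exports.
Local Open Scope classical_set_scope.
Local Open Scope ring_scope.

Definition negpart {R : realType} (a : R) : R := Num.max (- a) 0.

Definition time_dom {R : realType} : set R := [set t | 0 <= t].

Definition nondecr_time {R : realType} (f : R -> R) : Prop :=
  forall s t, 0 <= s -> s <= t -> f s <= f t.

Definition point_of_increase {R : realType} (f : R -> R) (t : R) : Prop :=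
  0 <= t /\ forall e : R, 0 < e -> f (Num.max 0 (t - e)) < f (t + e).

Definition increases_only_when {R : realType} (f : R -> R) (A : R -> Prop) : Prop :=
  forall t, point_of_increase f t -> A t.

(* f is right-continuous at every time t >= 0 (cadlag convention for
   cumulative processes: f t includes the trades made at time t) *)
Definition right_cont_time {R : realType} (f : R -> R) : Prop :=
  forall t : R, 0 <= t -> f x @[x --> t^'+] --> f t.

From HB Require Import structures.
From mathcomp Require Import all_boot all_order all_algebra.
From mathcomp Require Import all_classical all_reals all_analysis.
From mathcomp Require Import ring lra.
Import Order.TTheory GRing.Theory Num.Theory.
Import numFieldNormedType.Exports.
Local Open Scope classical_set_scope.
Local Open Scope ring_scope.

Set Implicit Arguments. Unset Strict Implicit. Unset Printing Implicit Defensive.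

(* With [a t = ln S_t - ln P_0], the log-mispricing is [Z = a + L - U], kept in
   the band [[ln gamma, - ln gamma]] by the nondecreasing pushes L and U: the
   pair (L, U) solves the Skorokhod problem for a on this interval.
   Everything rests on one observation: if a nondecreasing right-continuous f
   satisfies f s < f t, then the first time tau after s at which f reaches f t
   is a point of increase of f.  Applied to L, the value L t is attained at a
   time where Z sits on the lower boundary, which is the sup formula.  It also
   gives continuity: on a short interval [y, t] where a oscillates by less than
   the band width, U cannot increase on [y, tau] (otherwise Z would cross the
   whole band), so L t - L y = (Z tau - Z y) + (a y - a tau) <= a y - a tau. *)

Lemma continuous_time_domP {R : realType} (f : R -> R) :
  {within time_dom, continuous f} <->
  forall t, 0 <= t -> forall e, 0 < e -> exists2 d, 0 < d &
    forall y, 0 <= y -> `|t - y| < d -> `|f t - f y| < e.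
Proof.
split=> [/subspace_continuousP f_cont t t0 e e0 | f_cont].
  have /cvgrPdist_lt /(_ e e0) /nbhs_ballP [d d0 f_near] := f_cont t t0.
  by exists d => // y y0 ty; apply: f_near => //; rewrite -ball_normE.
apply/subspace_continuousP => t t0; apply/cvgrPdist_lt => e e0.
have [d d0 f_near] := f_cont t t0 e e0.
apply/nbhs_ballP; exists d => //= y; rewrite -ball_normE /=.
move=> ty y0; exact: f_near.
Qed.

Lemma right_cont_dist_lt {R : realType} (f : R -> R) (t : R) :
  f x @[x --> t^'+] --> f t ->
  forall e, 0 < e -> exists2 d, 0 < d &
    forall y, t < y -> y - t < d -> `|f t - f y| < e.
Proof.
move=> /cvgrPdist_lt f_rc e e0; have /nbhs_ballP [d d0 f_near] := f_rc e e0.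
exists d => // y ty ytd; apply: f_near => //.
by rewrite -ball_normE /= ltr0_norm ?subr_lt0 // opprB.
Qed.

Lemma ln_mul_le {R : realType} (k x y : R) : 0 < k -> 0 < x -> 0 < y ->
  (k * x <= y) = (ln k + ln x <= ln y).
Proof. by move=> k0 x0 y0; rewrite -lnM ?posrE // ler_ln ?posrE ?mulr_gt0. Qed.

Lemma ln_le_mul {R : realType} (k x y : R) : 0 < k -> 0 < x -> 0 < y ->
  (y <= k * x) = (ln y <= ln k + ln x).
Proof. by move=> k0 x0 y0; rewrite -lnM ?posrE // ler_ln ?posrE ?mulr_gt0. Qed.

Section NondecreasingPaths.
Variables (R : realType) (f : R -> R).
Hypotheses (f_nd : nondecr_time f) (f_rc : right_cont_time f).

Lemma exists_point_of_increase s t : 0 <= s -> s <= t -> f s < f t ->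
  exists tau, [/\ s < tau, tau <= t, f tau = f t & point_of_increase f tau].
Proof.
move=> s0 st fst.
pose A := [set r | s <= r <= t /\ f t <= f r].
have At : A t by split; [rewrite st lexx | ].
have A_inf : has_inf A by split; [exists t | exists s => r [/andP[]]].
pose tau := inf A.
have stau : s <= tau by apply: lb_le_inf; [exists t | move=> r [/andP[]]].
have tau0 : 0 <= tau := le_trans s0 stau.
have ftau : f t <= f tau.
  rewrite leNgt; apply/negP => ftau_lt.
  have gap : 0 < f t - f tau by rewrite subr_gt0.
  have [d d0 f_near] := right_cont_dist_lt (f_rc tau0) gap.
  have [r [/andP[sr _] fr] rlt] := inf_adherent d0 A_inf.
  have [taur | taur] := ltP tau r; last first.
    by have := f_nd (le_trans s0 sr) taur; lra.
  by have := f_near r taur ltac:(lra); rewrite ltr_norml; lra.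
have taut : tau <= t := ge_inf (proj2 A_inf) At.
have ftauE : f tau = f t by apply/le_anti; rewrite ftau f_nd.
have s_lt_tau : s < tau by rewrite lt_neqAle stau andbT; apply: contraTneq fst => ->; lra.
exists tau; split=> //; split=> // e e0.
have ftfe : f t <= f (tau + e) by rewrite -ftauE f_nd // lerDl ltW.
apply: lt_le_trans ftfe.
pose m := Num.max 0 (tau - e).
have m0 : 0 <= m by rewrite le_max lexx.
have mtau : m < tau by rewrite gt_max; apply/andP; split; lra.
have [ms | sm] := leP m s; first exact: le_lt_trans (f_nd m0 ms) fst.
rewrite ltNge; apply/negP => ftm.
have Am : A m by split; rewrite // (ltW sm) (le_trans (ltW mtau)).
by have := ge_inf (proj2 A_inf) Am; rewrite -/tau leNgt mtau.
Qed.

Lemma nondecr_eq_sup (h : R -> R) t : f 0 = 0 ->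
  (forall s, 0 <= s -> 0 <= h s <= f s) ->
  (forall s, point_of_increase f s -> h s = f s) -> 0 <= t ->
  f t = sup [set h s | s in [set s | 0 <= s <= t]].
Proof.
move=> f0 h_bnd h_inc t0.
have [s s0t hs] : exists2 s, 0 <= s <= t & h s = f t.
  have [f0t | ft0] := ltP (f 0) (f t).
    have [tau [? ? <- tau_inc]] := exists_point_of_increase (lexx 0) t0 f0t.
    by exists tau; [rewrite ltW | exact: h_inc].
  exists 0; first by rewrite lexx.
  have := h_bnd 0 (lexx 0); have := f_nd (lexx 0) t0; rewrite f0 in ft0 *; lra.
have ft_ub : ubound [set h s | s in [set s | 0 <= s <= t]] (f t).
  move=> _ [r /andP[r0 rt] <-].
  by have /andP[_ hr] := h_bnd r r0; exact: le_trans hr (f_nd r0 rt).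
apply/le_anti; rewrite ge_sup //; last by exists (f t); exists s.
by rewrite andbT; apply: ub_le_sup; [exists (f t) | exists s].
Qed.

End NondecreasingPaths.

Section Regulator.
Variables (R : realType) (c : R) (a f g Z : R -> R).
Hypotheses (c_lt0 : c < 0) (ZE : forall t, 0 <= t -> Z t = a t + f t - g t)
  (Z_ge : forall t, 0 <= t -> c <= Z t).
Hypotheses (f_nd : nondecr_time f) (g_nd : nondecr_time g).
Hypotheses (f_rc : right_cont_time f) (g_rc : right_cont_time g).
Hypotheses (f_inc : increases_only_when f (fun t => Z t = c))
  (g_inc : increases_only_when g (fun t => Z t = - c)).

Lemma regulator_increment_le y t eps : 0 <= y -> y <= t -> eps < - 2 * c ->
  (forall r s, y <= r <= t -> y <= s <= t -> a r - a s <= eps) ->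
  f t - f y <= eps.
Proof.
move=> y0 yt eps_lt a_osc.
have yty : y <= y <= t by rewrite lexx yt.
have [fyt | fty] := ltP (f y) (f t); last by have := a_osc y y yty yty; lra.
have [tau [ytau taut <- tau_inc]] := exists_point_of_increase f_nd f_rc y0 yt fyt.
have tau0 : 0 <= tau by lra.
have ytaut : y <= tau <= t by rewrite taut andbT ltW.
have g_flat : g tau = g y.
  apply/le_anti/andP; split; last exact: g_nd y0 (ltW ytau).
  rewrite leNgt; apply/negP => gy_lt.
  have [sig [ysig sigtau gsig sig_inc]] :=
    exists_point_of_increase g_nd g_rc y0 (ltW ytau) gy_lt.
  have sig0 : 0 <= sig by lra.
  have ysigt : y <= sig <= t by apply/andP; split; lra.
  have := a_osc sig tau ysigt ytaut; have := f_nd sig0 sigtau.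
  have := ZE sig0; have := ZE tau0.
  have := f_inc tau_inc; have := g_inc sig_inc; lra.
have := a_osc y tau yty ytaut; have := ZE y0; have := ZE tau0.
have := Z_ge y0; have := f_inc tau_inc; lra.
Qed.

Lemma regulator_continuous :
  {within time_dom, continuous a} -> {within time_dom, continuous f}.
Proof.
move=> /continuous_time_domP a_cont; apply/continuous_time_domP => t t0 e e0.
pose eta := Num.min (e / 3) (- c / 2).
have eta0 : 0 < eta by rewrite lt_min !divr_gt0 ?oppr_gt0.
have [eta_e eta_c] : eta <= e / 3 /\ eta <= - c / 2 by rewrite !ge_min !lexx orbT.
have [d1 d10 a_near] := a_cont t t0 eta eta0.
have [d2 d20 f_right] := right_cont_dist_lt (f_rc t0) e0.
exists (Num.min d1 d2) => [|y y0]; first by rewrite lt_min d10 d20.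
rewrite lt_min => /andP[ty1 ty2].
have [yt | ty | ->] := ltgtP y t; last by rewrite subrr normr0.
- have fyt : f y <= f t by apply: f_nd => //; exact: ltW.
  rewrite ger0_norm ?subr_ge0 //.
  suff : f t - f y <= 2 * eta by lra.
  apply: regulator_increment_le => //; [exact: ltW | lra | ].
  have yt_d1 : t - y < d1 by move: ty1; rewrite ger0_norm // subr_ge0 ltW.
  have a_close r : y <= r <= t -> `|a t - a r| < eta.
    by move=> /andP[yr rt]; apply: a_near; rewrite ?ger0_norm ?subr_ge0; lra.
  move=> r s /a_close + /a_close; rewrite !ltr_norml; lra.
- by apply: f_right => //; move: ty2; rewrite ltr0_norm ?subr_lt0 // opprB.
Qed.

Lemma regulator_eq_sup t : f 0 = 0 -> 0 <= t ->
  f t = sup [set negpart (a s - g s - c) | s in [set s | 0 <= s <= t]].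
Proof.
move=> f0 t0; apply: nondecr_eq_sup => // s.
  move=> s0; have f_ge0 : 0 <= f s by rewrite -f0 f_nd.
  have := Z_ge s0; have := ZE s0.
  by rewrite /negpart le_max lexx orbT ge_max f_ge0 andbT /=; lra.
move=> s_inc; have s0 := s_inc.1; have f_ge0 : 0 <= f s by rewrite -f0 f_nd.
have := f_inc s_inc; have := ZE s0; rewrite /negpart => ZsE Zs.
by rewrite (_ : - _ = f s) ?max_l //; lra.
Qed.

End Regulator.

Theorem mainTheorem2 (R : realType) (gamma P0 : R) (S P L U : R -> R)
  (* fee parameter *)
  (hgamma0 : 0 < gamma) (hgamma1 : gamma < 1)
  (* continuous positive reference price on [0,+oo) *)
  (hSpos : forall t, 0 <= t -> 0 < S t)
  (hScont : {within time_dom, continuous S})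
  (* initial pool price, inside the no-arbitrage band *)
  (hP0pos : 0 < P0) (hP0 : P 0 = P0)
  (hband0 : gamma * P0 <= S 0 /\ S 0 <= gamma^-1 * P0)
  (* pool price and its decomposition into cumulative arbitrage pushes *)
  (hPpos : forall t, 0 <= t -> 0 < P t)
  (hlnP : forall t, 0 <= t -> ln (P t) = ln P0 + U t - L t)
  (hLmono : nondecr_time L) (hUmono : nondecr_time U)
  (hL0 : L 0 = 0) (hU0 : U 0 = 0)
  (* cumulative processes are right-continuous (cadlag convention) *)
  (hLrc : right_cont_time L) (hUrc : right_cont_time U)
  (* arbitrageurs immediately act: pool price stays in the no-arbitrage band *)
  (hband : forall t, 0 <= t -> gamma * S t <= P t /\ P t <= gamma^-1 * S t)
  (* arbitrage trades only occur when there is an arbitrage opportunity: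
     X is sold to the pool only when P_t >= S_t / gamma,
     X is bought from the pool only when P_t <= gamma * S_t *)
  (hLarb : increases_only_when L (fun t => gamma^-1 * S t <= P t))
  (hUarb : increases_only_when U (fun t => P t <= gamma * S t)) :
  let Z := fun t => ln (S t / P t) in
  (* (a) *)
  (forall t, 0 <= t ->
     Z t = ln (S t) - ln P0 + L t - U t /\ ln gamma <= Z t /\ Z t <= - ln gamma) /\
  (* (b) *)
  (nondecr_time L /\ nondecr_time U /\
   {within time_dom, continuous L} /\ {within time_dom, continuous U} /\
   L 0 = 0 /\ U 0 = 0) /\
  (* (c) *)
  (increases_only_when L (fun t => Z t = ln gamma) /\
   increases_only_when U (fun t => Z t = - ln gamma)) /\
  (* Skorokhod-type representation *)
  (forall t, 0 <= t ->
     L t = sup [set negpart (- ln (gamma * P0) + ln (S s) - U s) | s in [set s | 0 <= s <= t]] /\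
     U t = sup [set negpart (ln (gamma^-1 * P0) - ln (S s) - L s) | s in [set s | 0 <= s <= t]]).
Proof.
move=> Z; set c := ln gamma; pose a t := ln (S t) - ln P0.
have c_lt0 : c < 0 by rewrite ln_lt0 // hgamma0 hgamma1.
have ln_ginv : ln gamma^-1 = - c by rewrite lnV ?posrE.
have lnZ t : 0 <= t -> Z t = ln (S t) - ln (P t).
  by move=> t0; rewrite /Z lnM ?lnV ?posrE ?invr_gt0 ?hSpos ?hPpos.
have ZE t : 0 <= t -> Z t = a t + L t - U t.
  by move=> t0; rewrite lnZ // hlnP // /a; ring.
have Z_band t : 0 <= t -> c <= Z t <= - c.
  move=> t0; have [] := hband t t0.
  rewrite ln_mul_le ?ln_le_mul ?invr_gt0 ?hSpos ?hPpos // -/c ln_ginv lnZ //.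
  by move=> lo hi; apply/andP; split; lra.
have ZL : increases_only_when L (fun t => Z t = c).
  move=> t t_inc; have t0 := t_inc.1; have := Z_band t t0; have := hLarb t t_inc.
  rewrite ln_mul_le ?invr_gt0 ?hSpos ?hPpos // ln_ginv lnZ // => arb /andP[lo hi]; lra.
have ZU : increases_only_when U (fun t => Z t = - c).
  move=> t t_inc; have t0 := t_inc.1; have := Z_band t t0; have := hUarb t t_inc.
  rewrite ln_le_mul ?hSpos ?hPpos // -/c lnZ // => arb /andP[lo hi]; lra.
have a_cont : {within time_dom, continuous a}.
  apply: (@within_continuous_comp _ _ _ _ S (fun x => ln x - ln P0) _ hScont).
  move=> _ /set_mem [t t0 <-]; apply: continuousB; last exact: cst_continuous.
  exact: continuous_ln (hSpos t t0).
have na_cont : {within time_dom, continuous (fun t => - a t)}.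
  by apply: (@within_continuous_comp _ _ _ _ a -%R _ a_cont) => x _; exact: oppr_continuous.
have nZE t : 0 <= t -> - Z t = - a t + U t - L t by move=> /ZE ->; ring.
have Z_ge t : 0 <= t -> c <= Z t by move=> /Z_band /andP[].
have nZ_ge t : 0 <= t -> c <= - Z t by move=> /Z_band; lra.
have nZU : increases_only_when U (fun t => - Z t = c) by move=> t /ZU ->; rewrite opprK.
have nZL : increases_only_when L (fun t => - Z t = - c) by move=> t /ZL ->.
split.
  by move=> t t0; have /andP[lo hi] := Z_band t t0; split=> //; exact: ZE.
split; first do 2 split=> //.
  split; first exact: (regulator_continuous c_lt0 ZE Z_ge).
  by split=> //; exact: (regulator_continuous c_lt0 nZE nZ_ge).
split=> // t t0; split.
  rewrite (regulator_eq_sup ZE Z_ge hLmono hLrc ZL hL0 t0).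
  by congr sup; apply: eq_imagel => s _; rewrite lnM ?posrE // -/c /a; congr negpart; ring.
rewrite (regulator_eq_sup nZE nZ_ge hUmono hUrc nZU hU0 t0).
by congr sup; apply: eq_imagel => s _; rewrite lnM ?posrE ?invr_gt0 // ln_ginv /a; congr negpart; ring.
Qed.
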